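(* Let $B_n$ be the closed Euclidean unit ball in $\mathbf{R}^n$ and $S^{n-1} = \partial B_n$. Let $\mathcal{E}$ be an ellipsoid such that $\mathcal{E} \subset B_n$. Then $\mathcal{E} \cap S^{n-1}$ is a subsphere.
   Context: An ellipsoid is a subset of $\mathbf{R}^n$ of the form $\Theta(B_n)$ where $\Theta : \mathbf{R}^n \to \mathbf{R}^n$ is an affine map (possibly non-injective). A subset $A \subset S^{n-1}$ is a subsphere if $A = S^{n-1} \cap \mathrm{aff}(A)$, where $\mathrm{aff}(A)$ is the affine subspace generated by $A$ (so the empty set is a subsphere). *)

From HB Require Import structures.
From mathcomp Require Import all_boot all_order all_algebra.
From mathcomp Require Import boolp classical_sets reals.
Set Implicit Arguments. Unset Strict Implicit. Unset Printing Implicit Defensive.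
Import Order.TTheory GRing.Theory Num.Theory.
Local Open Scope ring_scope.
Local Open Scope classical_set_scope.

Definition sqnorm (R : realType) (n : nat) (x : 'rV[R]_n) : R :=
  \sum_(i < n) x ord0 i ^+ 2.

Definition ball_n (R : realType) (n : nat) : set 'rV[R]_n :=
  [set x | sqnorm x <= 1].

Definition sphere_n (R : realType) (n : nat) : set 'rV[R]_n :=
  [set x | sqnorm x = 1].

(* an affine map R^n -> R^n (possibly non-injective): x |-> x A + b *)
Definition affine_map (R : realType) (n : nat) (A : 'M[R]_n) (b : 'rV[R]_n)
  (x : 'rV[R]_n) : 'rV[R]_n := x *m A + b.

Definition ellipsoid (R : realType) (n : nat) (A : 'M[R]_n) (b : 'rV[R]_n)
  : set 'rV[R]_n := [set affine_map A b x | x in @ball_n R n].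

Definition aff (R : realType) (n : nat) (S : set 'rV[R]_n) : set 'rV[R]_n :=
  [set y | exists (k : nat) (c : 'I_k -> R) (a : 'I_k -> 'rV[R]_n),
      (forall i, S (a i)) /\ \sum_(i < k) c i = 1 /\ y = \sum_(i < k) c i *: a i].

Definition subsphere (R : realType) (n : nat) (S : set 'rV[R]_n) : Prop :=
  S = @sphere_n R n `&` aff S.

(* Write the ellipsoid as E = {x A + b : |x| <= 1} and let y = q0 A + b be a contact point,
   |y| = 1. The functional <y, .> attains its maximum 1 over E at y, which yields a unit
   preimage q of y with y A^T = s q, s >= 0 (a Lagrange condition). Expanding around q,
     1 - |x A + b|^2 = s (1 - |x|^2) + Q (x - q),   Q w = s |w|^2 - |w A|^2,
   and E <= B_n forces the form Q to be positive semidefinite. Hence the preimages x in B_n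
   of contact points are unit vectors with x - q in the kernel of Q, an affine condition.
   An affine combination z of contact points is the image of the same combination X of
   preimages, so X - q is again in the kernel, and |z| = 1 then forces s (1 - |X|^2) = 0:
   either |X| = 1, or s = 0 and X A = q A; in both cases z lies in E. *)

From HB Require Import structures.
From mathcomp Require Import all_boot all_order all_algebra.
From mathcomp Require Import boolp classical_sets reals.
From mathcomp Require Import ring lra.
Import Order.TTheory GRing.Theory Num.Theory.
Local Open Scope ring_scope.
Local Open Scope classical_set_scope.
Set Implicit Arguments. Unset Strict Implicit. Unset Printing Implicit Defensive.

Section DotProduct.
Variables (R : realFieldType) (n : nat).
Implicit Types (u v w : 'rV[R]_n) (M : 'M[R]_n).

Definition dot u v : R := (u *m v^T) 0 0.

Lemma dotC u v : dot u v = dot v u.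
Proof. by rewrite /dot -[v *m u^T]trmxK trmx_mul !trmxK [in RHS]mxE. Qed.

Lemma dotDl u v w : dot (u + v) w = dot u w + dot v w.
Proof. by rewrite /dot mulmxDl mxE. Qed.

Lemma dotZl (a : R) u v : dot (a *: u) v = a * dot u v.
Proof. by rewrite /dot -scalemxAl mxE. Qed.

Lemma dotNl u v : dot (- u) v = - dot u v.
Proof. by rewrite -scaleN1r dotZl mulN1r. Qed.

Lemma dotBl u v w : dot (u - v) w = dot u w - dot v w.
Proof. by rewrite dotDl dotNl. Qed.

Lemma dot0l u : dot 0 u = 0.
Proof. by rewrite /dot mul0mx mxE. Qed.

Lemma dotDr u v w : dot w (u + v) = dot w u + dot w v.
Proof. by rewrite !(dotC w) dotDl. Qed.

Lemma dotZr (a : R) u v : dot v (a *: u) = a * dot v u.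
Proof. by rewrite !(dotC v) dotZl. Qed.

Lemma dotNr u v : dot v (- u) = - dot v u.
Proof. by rewrite !(dotC v) dotNl. Qed.

Lemma dotBr u v w : dot w (u - v) = dot w u - dot w v.
Proof. by rewrite !(dotC w) dotBl. Qed.

Lemma dot0r u : dot u 0 = 0.
Proof. by rewrite dotC dot0l. Qed.

Lemma dotMl M u v : dot (u *m M) v = dot u (v *m M^T).
Proof. by rewrite /dot trmx_mul trmxK mulmxA. Qed.

Lemma dotvv_sum u : dot u u = \sum_(i < n) u 0 i ^+ 2.
Proof. by rewrite /dot mxE; apply: eq_bigr => i _; rewrite mxE expr2. Qed.

Lemma dotvv_ge0 u : 0 <= dot u u.
Proof. by rewrite dotvv_sum; apply: sumr_ge0 => i _; apply: sqr_ge0. Qed.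

Lemma dotvv_eq0 u : dot u u = 0 -> u = 0.
Proof.
rewrite dotvv_sum => uu_eq0; apply/matrixP => i j.
have /eqP := psumr_eq0P (fun k _ => sqr_ge0 (u 0 k)) uu_eq0 (i := j) isT.
by rewrite (ord1 i) sqrf_eq0 mxE => /eqP.
Qed.

Lemma dotvv_gt0 u : u != 0 -> 0 < dot u u.
Proof.
move=> u_neq0; rewrite lt_def dotvv_ge0 andbT.
by apply: contra u_neq0 => /eqP/dotvv_eq0->.
Qed.

Lemma dotvvD u v : dot (u + v) (u + v) = dot u u + 2 * dot u v + dot v v.
Proof. rewrite !dotDl !dotDr (dotC v u); ring. Qed.

Lemma dotvvB u v : dot (u - v) (u - v) = dot u u - 2 * dot u v + dot v v.
Proof. rewrite dotvvD dotNr !dotNl dotNr opprK; ring. Qed.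

Lemma dot_le1 u v : dot u u <= 1 -> dot v v <= 1 -> dot u v <= 1.
Proof. by have := dotvv_ge0 (u - v); rewrite dotvvB; lra. Qed.

Lemma unit_eq_of_dot_ge1 u v : dot u u = 1 -> dot v v <= 1 -> 1 <= dot u v -> v = u.
Proof.
move=> uu1 vv_le1 uv_ge1; apply/esym/subr0_eq/dotvv_eq0/eqP.
by rewrite eq_le dotvv_ge0 andbT dotvvB; lra.
Qed.

End DotProduct.

Section QuadraticForm.
Variables (R : realFieldType) (n : nat) (M : 'M[R]_n).
Implicit Types (u v w q : 'rV[R]_n).

Definition qform u := dot (u *m M) u.

Lemma qformZ (a : R) u : qform (a *: u) = a ^+ 2 * qform u.
Proof. by rewrite /qform -scalemxAl dotZl dotZr mulrA -expr2. Qed.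

Lemma qformN u : qform (- u) = qform u.
Proof. by rewrite -scaleN1r qformZ sqrrN expr1n mul1r. Qed.

Lemma qform_parallelogram u v : qform (u + v) + qform (u - v) = 2 * qform u + 2 * qform v.
Proof. rewrite /qform mulmxDl mulmxBl !dotDl !dotDr !dotNl !dotNr; ring. Qed.

Lemma qform_ge0_off_hyperplane q : q != 0 ->
  (forall w, dot q w != 0 -> 0 <= qform w) -> forall w, 0 <= qform w.
Proof.
move=> q_neq0 ge0_off w; have qq_gt0 := dotvv_gt0 q_neq0.
have [qw_eq0|qw_neq0] := eqVneq (dot q w) 0; last exact: ge0_off.
have qf_q : 0 <= qform q by apply: ge0_off; rewrite lt0r_neq0.
have ge0_perturbed t : 0 < t -> 0 <= qform w + t ^+ 2 * qform q.
  move=> t_gt0; have := qform_parallelogram w (t *: q); rewrite qformZ.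
  have /ge0_off : dot q (w + t *: q) != 0.
    by rewrite dotDr dotZr qw_eq0 add0r mulf_neq0 ?gt_eqF ?lt0r_neq0.
  have /ge0_off : dot q (w - t *: q) != 0.
    by rewrite dotBr dotZr qw_eq0 sub0r oppr_eq0 mulf_neq0 ?lt0r_neq0.
  lra.
rewrite leNgt; apply/negP => qf_w_lt0.
pose t := - qform w / (- qform w + qform q).
have t_gt0 : 0 < t by rewrite divr_gt0 //; lra.
have tE : t * (- qform w + qform q) = - qform w by rewrite divfK //; apply: lt0r_neq0; lra.
(* t is small enough that t^2 qform q < - qform w *)
have := ge0_perturbed t t_gt0; nra.
Qed.

(* Every line through q not tangent to the sphere meets it a second time, at q + t w. *)
Lemma qform_ge0_of_sphere q : dot q q = 1 ->
  (forall x, dot x x = 1 -> 0 <= qform (x - q)) -> forall w, 0 <= qform w.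
Proof.
move=> qq1 ge0_sphere; apply: (@qform_ge0_off_hyperplane q).
  by apply: contra_eqN qq1 => /eqP->; rewrite dot0l eq_sym oner_eq0.
suff ge0_neg w : dot q w < 0 -> 0 <= qform w.
  move=> w; rewrite neq_lt => /orP[/ge0_neg //|qw_gt0].
  by rewrite -qformN; apply: ge0_neg; rewrite dotNr oppr_lt0.
move=> qw_lt0; have ww_gt0 : 0 < dot w w.
  by apply: dotvv_gt0; apply: contraTneq qw_lt0 => ->; rewrite dot0r ltxx.
pose t := - (2 * dot q w) / dot w w.
have t_gt0 : 0 < t by rewrite divr_gt0 //; lra.
have : dot (q + t *: w) (q + t *: w) = 1.
  rewrite dotvvD dotZr dotZl dotZr qq1 /t; field; lra.
move/ge0_sphere; rewrite (addrC q) addrK qformZ pmulr_rge0 //.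
exact: exprn_gt0.
Qed.

Hypothesis M_sym : M^T = M.

Lemma qformDZ u v (t : R) :
  qform (u + t *: v) = qform u + 2 * t * dot (u *m M) v + t ^+ 2 * qform v.
Proof.
rewrite /qform mulmxDl -scalemxAl !dotDl !dotDr !dotZl !dotZr.
rewrite [dot (v *m M) u]dotMl M_sym [dot v _]dotC; ring.
Qed.

Lemma qform_eq0_ker : (forall w, 0 <= qform w) -> forall u, qform u = 0 -> u *m M = 0.
Proof.
(* qform (u + t *: u M) = 2 t |u M|^2 + t^2 qform (u M) is negative for small t < 0. *)
move=> qform_ge0 u qf_u; apply: dotvv_eq0.
set G := dot (u *m M) (u *m M); set Q := qform (u *m M).
have := dotvv_ge0 (u *m M); have := qform_ge0 (u *m M); rewrite -/G -/Q => Q_ge0 G_ge0.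
pose t := - G / (Q + 1).
have tE : t * (Q + 1) = - G by rewrite divfK //; apply: lt0r_neq0; lra.
have := qform_ge0 (u + t *: (u *m M)); rewrite qformDZ qf_u -/G -/Q; nra.
Qed.

End QuadraticForm.

Section AffineCombination.
Variables (R : ringType) (k : nat) (c : 'I_k -> R).
Hypothesis c_sum1 : \sum_(i < k) c i = 1.

Lemma affine_comb_subr (V : lmodType R) (x : 'I_k -> V) (q : V) :
  \sum_(i < k) c i *: x i - q = \sum_(i < k) c i *: (x i - q).
Proof.
by rewrite (eq_bigr _ (fun i _ => scalerBr _ _ _)) sumrB -scaler_suml c_sum1 scale1r.
Qed.

Lemma affine_map_comb n (A : 'M[R]_n) (b : 'rV[R]_n) (x : 'I_k -> 'rV[R]_n) :
  (\sum_(i < k) c i *: x i) *m A + b = \sum_(i < k) c i *: (x i *m A + b).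
Proof.
rewrite (eq_bigr _ (fun i _ => scalerDr _ _ _)) big_split /= -scaler_suml c_sum1 scale1r.
by rewrite mulmx_suml; congr (_ + _); apply: eq_bigr => i _; rewrite scalemxAl.
Qed.

End AffineCombination.

Lemma sqnormE (R : realType) n (x : 'rV[R]_n) : sqnorm x = dot x x.
Proof. by rewrite dotvv_sum. Qed.

Lemma sphere_nE (R : realType) n (y : 'rV[R]_n) : sphere_n y = (dot y y = 1).
Proof. by rewrite /sphere_n /= sqnormE. Qed.

Section EllipsoidInBall.
Variables (R : realType) (n : nat) (A : 'M[R]_n) (b : 'rV[R]_n).
Implicit Types (x y : 'rV[R]_n).

Lemma ellipsoidP y : ellipsoid A b y <-> exists2 x, dot x x <= 1 & x *m A + b = y.
Proof. by split=> -[x x_in <-]; exists x; rewrite // /ball_n /= sqnormE in x_in *. Qed.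

Hypothesis E_sub_ball : ellipsoid A b `<=` @ball_n R n.

Lemma image_dot_le1 x : dot x x <= 1 -> dot (x *m A + b) (x *m A + b) <= 1.
Proof. by move=> xx_le1; rewrite -sqnormE; apply: E_sub_ball; apply/ellipsoidP; exists x. Qed.

(* Witnesses: q = y A^T / |y A^T| and s = |y A^T|, or q = y and s = 0 when y A^T = 0. *)
Lemma contact_point_tangency y : ellipsoid A b y -> sphere_n y ->
  exists q s, [/\ dot q q = 1, 0 <= s, q *m A + b = y & y *m A^T = s *: q].
Proof.
move=> /ellipsoidP[q0 q0_le1 q0y]; rewrite sphere_nE => yy1.
have dot_image x : dot y (x *m A + b) = dot x (y *m A^T) + dot y b.
  by rewrite dotDr dotC dotMl.
have maximizer q : dot q q = 1 -> dot q0 (y *m A^T) <= dot q (y *m A^T) ->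
    q *m A + b = y.
  move=> qq1 q0_le_q; apply: unit_eq_of_dot_ge1 => //.
    by apply: image_dot_le1; rewrite qq1.
  by move: yy1; rewrite -{2}q0y !dot_image; lra.
have [v_eq0|v_neq0] := eqVneq (y *m A^T) 0.
  exists y, 0; rewrite scale0r; split=> //; apply: maximizer => //.
  by rewrite v_eq0 !dot0r.
set v := y *m A^T in v_neq0 maximizer *.
have vv_gt0 := dotvv_gt0 v_neq0; set s := Num.sqrt (dot v v).
have s_gt0 : 0 < s by rewrite sqrtr_gt0.
have s2E : s ^+ 2 = dot v v by rewrite sqr_sqrtr // ltW.
have vs_unit : dot (s^-1 *: v) (s^-1 *: v) = 1.
  by rewrite dotZl dotZr -s2E; field; rewrite lt0r_neq0.
exists (s^-1 *: v), s; split=> //; first exact: ltW.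
  apply: maximizer => //; rewrite dotZl -s2E expr2 mulKf ?lt0r_neq0 //.
  have /(dot_le1 q0_le1) : dot (s^-1 *: v) (s^-1 *: v) <= 1 by rewrite vs_unit.
  by rewrite dotZr ler_pdivrMl // mulr1.
by rewrite scalerA mulfV ?scale1r ?lt0r_neq0.
Qed.

Section ContactPoint.
Variables (y q : 'rV[R]_n) (s : R).
Hypotheses (yy1 : dot y y = 1) (qq1 : dot q q = 1) (s_ge0 : 0 <= s).
Hypotheses (qy : q *m A + b = y) (yAt : y *m A^T = s *: q).

Local Notation M := (s%:M - A *m A^T).

Lemma M_sym : M^T = M.
Proof. by rewrite linearB /= tr_scalar_mx trmx_mul trmxK. Qed.

Lemma contact_defect x :
  1 - dot (x *m A + b) (x *m A + b) = s * (1 - dot x x) + qform M (x - q).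
Proof.
set w := x - q; have -> : x = q + w by rewrite addrC subrK.
have yw : dot y (w *m A) = s * dot q w by rewrite dotC dotMl yAt dotZr dotC.
rewrite mulmxDl (addrAC (q *m A)) qy /qform mulmxBr mul_mx_scalar mulmxA.
rewrite dotBl dotZl [dot (_ *m A^T) w]dotMl trmxK !dotvvD yy1 qq1 yw; ring.
Qed.

Lemma contact_qform_ge0 w : 0 <= qform M w.
Proof.
apply: (qform_ge0_of_sphere qq1) w => x xx1.
have := contact_defect x; rewrite xx1 subrr mulr0 add0r => <-.
by rewrite subr_ge0 image_dot_le1 ?xx1.
Qed.

Lemma contact_preimage_ker x : dot x x <= 1 -> sphere_n (x *m A + b) -> (x - q) *m M = 0.
Proof.
rewrite sphere_nE => xx_le1 image_unit; apply: qform_eq0_ker M_sym contact_qform_ge0 _ _.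
have := contact_defect x; rewrite image_unit subrr.
have : 0 <= s * (1 - dot x x) by rewrite mulr_ge0 ?subr_ge0.
have := contact_qform_ge0 (x - q); lra.
Qed.

Lemma ker_preimage_in_ellipsoid x : (x - q) *m M = 0 -> sphere_n (x *m A + b) ->
  ellipsoid A b (x *m A + b).
Proof.
rewrite sphere_nE => ker_x image_unit; apply/ellipsoidP.
have := contact_defect x; rewrite image_unit subrr /qform ker_x dot0l addr0 => /esym/eqP.
rewrite mulf_eq0 subr_eq0 => /orP[/eqP s_eq0|/eqP xx1]; last by exists x; rewrite ?xx1.
exists q; first by rewrite qq1.
move: ker_x; rewrite mulmxBr mul_mx_scalar s_eq0 scale0r sub0r mulmxA => /eqP.
rewrite oppr_eq0 => /eqP/(congr1 (fun u => dot u (x - q))).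
rewrite dot0l dotMl trmxK => /dotvv_eq0.
by rewrite mulmxBl => /subr0_eq ->.
Qed.

End ContactPoint.

Lemma sphere_aff_contact_sub_ellipsoid :
  @sphere_n R n `&` aff (ellipsoid A b `&` @sphere_n R n) `<=` ellipsoid A b.
Proof.
move=> z [z_unit [k [c [a [a_contact [c_sum1 z_comb]]]]]]; subst z.
case: k c a a_contact c_sum1 z_unit => [|k] c a a_contact c_sum1 z_unit.
  by move: c_sum1; rewrite big_ord0 => /esym/eqP; rewrite oner_eq0.
have [E_y S_y] := a_contact ord0.
have yy1 : dot (a ord0) (a ord0) = 1 by rewrite -sphere_nE.
have [q [s [qq1 s_ge0 qy yAt]]] := contact_point_tangency E_y S_y.
have /choice[x xP] i : exists x, dot x x <= 1 /\ x *m A + b = a i.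
  by have [/ellipsoidP[x xx_le1 xa] _] := a_contact i; exists x.
have ker_x i : (x i - q) *m (s%:M - A *m A^T) = 0.
  have [xx_le1 xa] := xP i.
  apply: contact_preimage_ker yy1 qq1 s_ge0 qy yAt _ xx_le1 _.
  by rewrite xa; case: (a_contact i).
have zE : \sum_i c i *: a i = (\sum_i c i *: x i) *m A + b.
  by rewrite affine_map_comb //; apply: eq_bigr => i _; rewrite (xP i).2.
rewrite zE in z_unit *; apply: (ker_preimage_in_ellipsoid yy1 qq1 qy yAt) z_unit.
rewrite affine_comb_subr // mulmx_suml big1 // => i _.
by rewrite -scalemxAl ker_x scaler0.
Qed.

End EllipsoidInBall.

Unset Implicit Arguments.
Set Strict Implicit.

Theorem lemma5 (R : realType) (n : nat) (A : 'M[R]_n) (b : 'rV[R]_n) :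
  ellipsoid A b `<=` @ball_n R n ->
  subsphere (ellipsoid A b `&` @sphere_n R n).
Proof.
move=> E_sub_ball; apply/seteqP; split=> [y [E_y S_y]|y [S_y aff_y]]; split=> //.
  by exists 1%N, (fun=> 1), (fun=> y); rewrite !big_ord1 scale1r.
exact: (sphere_aff_contact_sub_ellipsoid E_sub_ball (conj S_y aff_y)).
Qed.
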